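(* Let $X\sim p$ with $\mathrm{Var}[X]<\infty$, and let $\tau:=-\widetilde{\mathcal{T}}\,\mathrm{id}$, where $\mathrm{id}$ is the identity function. Then $$\mathrm{Var}[X]=\|\tau\|_{L^1(p)}\le\|w\|_{L^1(p)}$$ for every weight $w$ such that $C(p,w)=1$.
   Context: Let $-\infty\le a<b\le\infty$, $p\in L^1(]a,b[)$ with $p>0$ a.e. and $\int_a^b p=1$. A weight is a function $w\in L^1_{\mathrm{loc}}(]a,b[)$ with $w>0$ a.e. and $pw\in L^1_{\mathrm{loc}}(]a,b[)$. Write $\mathbb{E}_p[f]=\int_a^b fp$. $H^1(p,w)=\{h\in L^2(p): h$ locally absolutely continuous, $h'\in L^2(pw)\}$, and $C(p,w)\in[0,\infty]$ is the smallest $C$ with $\mathrm{Var}_p[h]\le C\,\mathbb{E}_p[|h'|^2w]$ for all $h\in H^1(p,w)$. For $h\in L^1(p)$, $\widetilde{\mathcal{T}} h(x)=\frac{1}{p(x)}\int_a^x(h-\mathbb{E}_p[h])\,p$. *)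

From HB Require Import structures.
From mathcomp Require Import all_boot all_order all_algebra.
From mathcomp Require Import all_classical all_reals all_analysis.
Set Implicit Arguments. Unset Strict Implicit. Unset Printing Implicit Defensive.
Import Order.TTheory GRing.Theory Num.Theory.
Local Open Scope classical_set_scope.
Local Open Scope ring_scope.

Section Defs.
Variable R : realType.
Notation mu := (@lebesgue_measure R).

Definition oitv (a b : \bar R) : set R := [set x : R | (a < x%:E)%E /\ (x%:E < b)%E].

Definition density (a b : \bar R) (p : R -> R) : Prop :=
  [/\ mu.-integrable (oitv a b) (fun x => (p x)%:E),
      {ae mu, forall x, oitv a b x -> 0 < p x} &
      (\int[mu]_(x in oitv a b) (p x)%:E = 1)%E].

Definition loc_integrable (a b : \bar R) (f : R -> R) : Prop :=
  measurable_fun (oitv a b) f /\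
  forall x y : R, oitv a b x -> oitv a b y ->
    mu.-integrable `[x, y] (fun t => (f t)%:E).

Definition weight (a b : \bar R) (p w : R -> R) : Prop :=
  [/\ loc_integrable a b w,
      {ae mu, forall x, oitv a b x -> 0 < w x} &
      loc_integrable a b (fun x => p x * w x)].

Definition L2p (a b : \bar R) (p h : R -> R) : Prop :=
  measurable_fun (oitv a b) h /\
  (\int[mu]_(x in oitv a b) ((h x) ^+ 2 * p x)%:E < +oo)%E.

Definition Ep (a b : \bar R) (p f : R -> R) : R :=
  fine (\int[mu]_(x in oitv a b) (f x * p x)%:E).

Definition Varp (a b : \bar R) (p h : R -> R) : \bar R :=
  \int[mu]_(x in oitv a b) ((h x - Ep a b p h) ^+ 2 * p x)%:E.

(* h in H^1(p,w) with (a.e.) derivative g: h in L^2(p), h locally absolutely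
   continuous with h' = g, i.e. g in L^1_loc and h y - h x = int_x^y g, and
   h' = g in L^2(p w). *)
Definition H1 (a b : \bar R) (p w h g : R -> R) : Prop :=
  [/\ L2p a b p h,
      loc_integrable a b g,
      (forall x y : R, oitv a b x -> oitv a b y -> x <= y ->
         h y - h x = \int[mu]_(t in `[x, y]) g t) &
      (\int[mu]_(x in oitv a b) ((g x) ^+ 2 * (p x * w x))%:E < +oo)%E].

Definition Dirichlet (a b : \bar R) (p w g : R -> R) : \bar R :=
  \int[mu]_(x in oitv a b) (`|g x| ^+ 2 * w x * p x)%:E.

Definition Cpw (a b : \bar R) (p w : R -> R) : \bar R :=
  ereal_inf [set C : \bar R | (0 <= C)%E /\
    forall h g, H1 a b p w h g -> (Varp a b p h <= C * Dirichlet a b p w g)%E].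

Definition Ttilde (a b : \bar R) (p h : R -> R) (x : R) : R :=
  (p x)^-1 * fine (\int[mu]_(t in oitv a x%:E) ((h t - Ep a b p h) * p t)%:E).

Definition L1norm (a b : \bar R) (p f : R -> R) : \bar R :=
  \int[mu]_(x in oitv a b) (`|f x| * p x)%:E.

End Defs.

From mathcomp Require Import all_boot all_order all_algebra.
From mathcomp Require Import all_classical all_reals all_analysis.
From mathcomp Require Import measurable_realfun.
From mathcomp.algebra_tactics Require Import lra.
Import Order.TTheory GRing.Theory Num.Theory.
Local Open Scope classical_set_scope.
Local Open Scope ring_scope.

(* Let m be the mean and F x := \int_a^x (t - m) p t dt, so that tau = - F / p.
   Since \int_a^b (t - m) p = 0, F <= 0 on ]a, b[ and |tau| p = - F.  Writing
   - F x = \int K(x, t) dt with K(x, t) = |t - m| p t whenever x lies between t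
   and m, Tonelli's theorem turns \int - F into \int (t - m)^2 p t dt = Var X,
   because for fixed t the admissible x fill an interval of length |t - m|.
   For the inequality, test the Poincare inequality with constant C(p, w) = 1 on
   h = id, h' = 1: Var X <= E_p[w] = ||w||_{L^1(p)}. *)

Local Notation mu := (@lebesgue_measure _).

Lemma in_set_bool {T} (P : T -> bool) x : (x \in [set y | P y]) = P x.
Proof. by apply/idP/idP => [/set_mem|/mem_set]. Qed.

Lemma measurable_fun_mem {d} {T : measurableType d} (D : set T) :
  measurable D -> measurable_fun setT (fun x => x \in D).
Proof.
move=> mD; apply: (measurable_fun_bool true); rewrite setTI.
rewrite (_ : _ @^-1` _ = D) //.
by apply/seteqP; split => x /=; [move/set_mem|move/mem_set].
Qed.

Section lebesgue_facts.
Context {R : realType}.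

Lemma measurable_oitv (a b : \bar R) :
  measurable (oitv a b : set (measurableTypeR R)).
Proof.
have := EFin_measurable measurableT (emeasurable_itv `]a, b[).
by rewrite setTI; congr measurable; apply/seteqP; split => x /=;
  rewrite in_itv /= => /andP.
Qed.

Lemma lebesgue_measure_sandwich (u v : R) (S : set (measurableTypeR R)) :
  u <= v -> measurable S -> `]u, v[ `<=` S -> S `<=` `[u, v] ->
  mu S = (v - u)%:E.
Proof.
move=> uv mS oS Sc.
have lenE b1 b2 : mu [set` Interval (BSide b1 u) (BSide b2 v)] = (v - u)%:E.
  rewrite (lebesgue_measure_itv (Interval (BSide b1 u) (BSide b2 v))) /= lte_fin.
  by case: ltgtP uv => [uv _|//|-> _]; rewrite ?subrr ?EFinB.
apply/eqP; rewrite eq_le; apply/andP; split.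
- by rewrite -(lenE true false) le_measure ?inE.
- by rewrite -(lenE false true) le_measure ?inE.
Qed.

Lemma lebesgue_measure_itv_cc_lty (u v : R) :
  (mu (`[u, v] : set (measurableTypeR R)) < +oo)%E.
Proof. by rewrite lebesgue_measure_itv; case: ifP => _; rewrite ?ltry. Qed.

Lemma measurable_inv : measurable_fun [set: R] (fun x : R => x^-1).
Proof.
have -> : [set: R] = [set~ 0] `|` [set 0] by rewrite setUC setUv.
apply/measurable_funU => //; first exact: measurableC.
split; last exact: measurable_fun_set1.
apply: open_continuous_measurable_fun.
  by rewrite openC; apply: accessible_closed_set1; exact: hausdorff_accessible.
by move=> x /set_mem /= x0; apply: inv_continuous; apply/eqP.
Qed.

Lemma le_mul_ereal_inf (S : set (\bar R)) (x : \bar R) (l : R) :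
  0 <= l -> S !=set0 -> (forall C, S C -> (x <= C * l%:E)%E) ->
  (x <= ereal_inf S * l%:E)%E.
Proof.
rewrite le_eqVlt => /predU1P[<- [C SC] xS|l_gt0 _ xS].
  by rewrite mule0; have := xS C SC; rewrite mule0.
rewrite -lee_pdivrMr //; apply: le_ereal_inf_tmp => C SC.
by rewrite lee_pdivrMr // xS.
Qed.

End lebesgue_facts.

Section poincare_constant.
Context {R : realType} (a b : \bar R) (p w : R -> R).

Lemma Varp_le_Cpw_mul_Dirichlet (h g : R -> R) (l : R) :
  0 <= l -> Cpw a b p w != +oo%E -> Dirichlet a b p w g = l%:E ->
  H1 a b p w h g -> (Varp a b p h <= Cpw a b p w * l%:E)%E.
Proof.
move=> l_ge0 C_fin Dl hg; apply: le_mul_ereal_inf => //.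
  by apply/set0P; apply: contra_neq C_fin => S0; rewrite /Cpw S0 ereal_inf0.
by move=> C [_ /(_ h g hg)]; rewrite Dl.
Qed.

End poincare_constant.

Section density.
Context {R : realType} (a b : \bar R) (p : R -> R).
Hypothesis dens : density a b p.
Local Notation I := (oitv a b).

Let mI : measurable (I : set (measurableTypeR R)) := measurable_oitv a b.

Lemma measurable_density : measurable_fun I p.
Proof. by case: dens => /integrableP[/measurable_EFinP]. Qed.

(* [p] is positive only almost everywhere; integrating against [`|p|] instead
   makes all the sign arguments below pointwise. *)
Lemma integral_density_normr (D : set R) (f : R -> R) :
  measurable D -> D `<=` I -> measurable_fun D f ->
  (\int[mu]_(x in D) (f x * p x)%:E = \int[mu]_(x in D) (f x * `|p x|)%:E)%E.
Proof.
move=> mD DI mf; have mp := measurable_funS mI DI measurable_density.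
apply: ae_eq_integral => //.
- by apply/measurable_EFinP; exact: measurable_funM.
- by apply/measurable_EFinP; apply: measurable_funM => //; exact: measurableT_comp.
case: dens => _ + _; apply: filterS; first exact: (ae_filter_ringOfSetsType mu).
by move=> x px Dx; rewrite gtr0_norm // px //; exact: DI.
Qed.

Lemma integrable_normr_density : mu.-integrable I (fun x => (`|p x|)%:E).
Proof. by case: dens => /integrable_norm. Qed.

Lemma integral_normr_density : (\int[mu]_(x in I) (`|p x|)%:E = 1)%E.
Proof.
case: (dens) => _ _ <-; transitivity (\int[mu]_(x in I) (1 * `|p x|)%:E)%E.
  by apply: eq_integral => x _; rewrite mul1r.
rewrite -integral_density_normr //.
by apply: eq_integral => x _; rewrite mul1r.
Qed.

Hypothesis p_L2 : L2p a b p id.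
Let m := Ep a b p id.

Lemma integrable_id_normr_density :
  mu.-integrable I (fun x => (x * `|p x|)%:E).
Proof.
have mp : measurable_fun I (fun x => `|p x|).
  exact: measurableT_comp measurable_density.
apply/integrableP; split; first by apply/measurable_EFinP; exact: measurable_funM.
apply: (@le_lt_trans _ _
  (\int[mu]_(x in I) ((`|p x|)%:E + (x ^+ 2 * `|p x|)%:E))%E).
  apply: ge0_le_integral => //.
  - by apply: measurableT_comp => //; apply/measurable_EFinP; exact: measurable_funM.
  - by apply: emeasurable_funD; apply/measurable_EFinP => //;
      apply: measurable_funM => //; exact: measurable_funX.
  - move=> x _; rewrite -EFinD lee_fin normrM normr_id.
    rewrite -[X in _ <= X + _]mul1r -mulrDl ler_wpM2r // -real_normK ?num_real //.
    nra.
rewrite ge0_integralD //.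
- rewrite integral_normr_density lte_add_pinfty ?ltry //.
  by rewrite -(integral_density_normr _ (fun x => x ^+ 2)) //; case: p_L2.
- by apply/measurable_EFinP.
- by move=> x _; rewrite lee_fin mulr_ge0 // sqr_ge0.
- by apply/measurable_EFinP; apply: measurable_funM => //; exact: measurable_funX.
Qed.

Lemma integral_id_normr_density :
  (\int[mu]_(x in I) (x * `|p x|)%:E = m%:E)%E.
Proof.
rewrite /m /Ep (integral_density_normr _ id) ?fineK //.
exact: integrable_fin_num integrable_id_normr_density.
Qed.

Lemma integrable_affine_normr_density (u v : R) :
  mu.-integrable I (fun x => ((u * x + v) * `|p x|)%:E).
Proof.
have := integrableD mI (integrableZl mI u integrable_id_normr_density)
  (integrableZl mI v integrable_normr_density).
by apply: eq_integrable => // x _; rewrite /= -!EFinM -EFinD mulrDl mulrA.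
Qed.

Lemma integral_affine_normr_density (u v : R) :
  (\int[mu]_(x in I) ((u * x + v) * `|p x|)%:E = (u * m + v)%:E)%E.
Proof.
transitivity
  (\int[mu]_(x in I) (u%:E * (x * `|p x|)%:E + v%:E * (`|p x|)%:E))%E.
  by apply: eq_integral => x _; rewrite -!EFinM -EFinD mulrDl mulrA.
have [int_id int_p] := (integrable_id_normr_density, integrable_normr_density).
rewrite integralD ?integralZl ?integral_id_normr_density ?integral_normr_density //.
- by rewrite mule1.
all: exact: integrableZl.
Qed.

Lemma ge0_affine_mean_density (u v : R) :
  (forall x, I x -> 0 <= u * x + v) -> 0 <= u * m + v.
Proof.
move=> uv_ge0; rewrite -lee_fin -integral_affine_normr_density.
by apply: integral_ge0 => x Ix; rewrite lee_fin mulr_ge0 ?uv_ge0.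
Qed.

Lemma integrable_centered_normr_density :
  mu.-integrable I (fun t => ((t - m) * `|p t|)%:E).
Proof.
apply: eq_integrable (integrable_affine_normr_density 1 (- m)) => // t _.
by rewrite mul1r.
Qed.

Lemma integral_centered_normr_density :
  (\int[mu]_(t in I) ((t - m) * `|p t|)%:E = 0)%E.
Proof.
under eq_integral do rewrite -[X in X - m]mul1r.
by rewrite integral_affine_normr_density mul1r subrr.
Qed.

Hypothesis ab : (a < b)%E.

Lemma mean_density_bounds : (a <= m%:E <= b)%E.
Proof.
apply/andP; split.
- case ea: a (ab) => [r| |] ab'; [|by rewrite ltNge leey in ab'|exact: leNye].
  rewrite lee_fin -subr_ge0 -[m]mul1r; apply: ge0_affine_mean_density => x [ax _].
  by rewrite mul1r subr_ge0 ltW // -lte_fin -ea.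
- case eb: b (ab) => [r| |] ab'; [|exact: leey|by rewrite ltNge leNye in ab'].
  rewrite lee_fin -subr_ge0 addrC -mulN1r.
  apply: ge0_affine_mean_density => x [_ xb].
  by rewrite mulN1r addrC subr_ge0 ltW // -lte_fin -eb.
Qed.

Definition partial_central_moment (x : R) : R :=
  fine (\int[mu]_(t in oitv a x%:E) ((t - m) * p t)%:E).

(* For fixed [x \in I] the admissible [t] form [oitv a x] if [x < m] and
   [I `&` `[x, +oo[] otherwise; for fixed [t \in I] the admissible [x] form an
   interval of length [|t - m|] (this uses [a <= m <= b]). *)
Definition tau_region (x t : R) : bool :=
  [&& x \in I, t \in I & (t < x < m) || (m <= x <= t)].

Definition tau_kernel : measurableTypeR R * measurableTypeR R -> \bar R :=
  (fun z => (`|z.2 - m| * `|p z.2|)%:E) \_ [set z | tau_region z.1 z.2].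

Lemma tau_kernelE x t :
  tau_kernel (x, t) = if tau_region x t then (`|t - m| * `|p t|)%:E else 0%E.
Proof. by rewrite /tau_kernel patchE in_set_bool. Qed.

Lemma tau_kernel_ge0 z : (0 <= tau_kernel z)%E.
Proof. by case: z => x t; rewrite tau_kernelE; case: ifP. Qed.

Lemma measurable_tau_region : measurable_fun setT
  (fun z : measurableTypeR R * measurableTypeR R => tau_region z.1 z.2).
Proof.
have m1 : measurable_fun [set: measurableTypeR R * measurableTypeR R]
  (fst : _ -> R) by exact: measurable_fst.
have m2 : measurable_fun [set: measurableTypeR R * measurableTypeR R]
  (snd : _ -> R) by exact: measurable_snd.
have mm : measurable_fun [set: measurableTypeR R * measurableTypeR R]
  (cst m : _ -> R) by exact: measurable_cst.
have mem_I := measurable_fun_mem _ mI.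
apply: measurable_and; first exact: measurableT_comp mem_I measurable_fst.
apply: measurable_and; first exact: measurableT_comp mem_I measurable_snd.
apply: measurable_or; apply: measurable_and.
- exact: measurable_fun_ltr m2 m1.
- exact: measurable_fun_ltr m1 mm.
- exact: measurable_fun_ler mm m1.
- exact: measurable_fun_ler m1 m2.
Qed.

Lemma measurable_tau_kernel : measurable_fun setT tau_kernel.
Proof.
have mT : measurable
    [set z : measurableTypeR R * measurableTypeR R | tau_region z.1 z.2].
  have := @measurable_tau_region measurableT [set true] Logic.I.
  by rewrite setTI; congr measurable.
apply/(measurable_restrictT _ mT)/measurable_EFinP; apply: measurable_funM.
  apply: measurableT_comp => //; apply: measurable_funB => //.
  exact: measurable_funS measurable_snd.
apply: measurableT_comp => //; apply: (measurable_comp mI) measurable_density _.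
  by move=> _ [[x t] /and3P[_ /set_mem tI _] <-].
exact: measurable_funS measurable_snd.
Qed.

Lemma measurable_tau_region_col t :
  measurable [set x : measurableTypeR R | tau_region x t].
Proof.
have := measurable_fun_pair1 t measurable_tau_region measurableT
  (Y := [set true]) Logic.I.
by rewrite setTI; congr measurable.
Qed.

Lemma lebesgue_measure_tau_region_col t : t \in I ->
  mu [set x : measurableTypeR R | tau_region x t] = (`|t - m|)%:E.
Proof.
move=> tI; have [at_ tb] := set_mem tI; have /andP[am mb] := mean_density_bounds.
have mS := measurable_tau_region_col t.
have [tm|mt] := ltP t m.
- rewrite ltr0_norm ?subr_lt0 // opprB.
  apply: (lebesgue_measure_sandwich _ _ _ (ltW tm) mS) => x /=.
  + rewrite in_itv /= => /andP[tx xm]; rewrite /tau_region tI tx xm /= andbT.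
    apply/mem_set; split; first by rewrite (lt_trans at_) ?lte_fin.
    by rewrite (lt_le_trans _ mb) ?lte_fin.
  + rewrite in_itv /= => /and3P[_ _ /orP[/andP[tx xm]|/andP[mx xt]]].
      by rewrite !ltW.
    by have := le_lt_trans (le_trans mx xt) tm; rewrite ltxx.
- rewrite ger0_norm ?subr_ge0 //.
  apply: (lebesgue_measure_sandwich _ _ _ mt mS) => x /=.
  + rewrite in_itv /= => /andP[mx xt].
    rewrite /tau_region tI (ltW mx) (ltW xt) /= orbT andbT.
    apply/mem_set; split; first by rewrite (le_lt_trans am) ?lte_fin.
    by rewrite (lt_trans _ tb) ?lte_fin.
  + rewrite in_itv /= => /and3P[_ _ /orP[/andP[tx xm]|/andP[mx xt]]].
      by have := lt_le_trans (lt_trans tx xm) mt; rewrite ltxx.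
    by rewrite mx xt.
Qed.

Lemma integral_tau_kernel_col t : (\int[mu]_x tau_kernel (x, t) =
  if t \in I then ((t - m) ^+ 2 * `|p t|)%:E else 0%E)%E.
Proof.
have [tI|tI] := boolP (t \in I); last first.
  under eq_integral do rewrite tau_kernelE /tau_region (negbTE tI) andbF.
  exact: integral0.
transitivity (\int[mu]_(x in [set x : measurableTypeR R | tau_region x t])
  (`|t - m| * `|p t|)%:E)%E.
  rewrite [RHS]integral_mkcond; apply: eq_integral => x _.
  by rewrite tau_kernelE patchE in_set_bool.
rewrite integral_cst; last exact: measurable_tau_region_col.
transitivity ((`|t - m| * `|p t|)%:E * (`|t - m|)%:E)%E.
  by congr (_ * _)%E; exact: lebesgue_measure_tau_region_col.
by rewrite -EFinM mulrAC -expr2 real_normK ?num_real.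
Qed.

Section row.
Variable x : R.
Hypothesis Ix : I x.
Local Notation A := (oitv a x%:E).
Local Notation B := (I `&` `[x, +oo[).

Let mA : measurable (A : set (measurableTypeR R)) := measurable_oitv a x%:E.
Let mB : measurable (B : set (measurableTypeR R)) :=
  measurableI _ _ mI (measurable_itv _).

Let memA t : (t \in A) = (t \in I) && (t < x).
Proof.
have [_ xb] := Ix; apply/idP/andP => [/set_mem[at_ tx]|[/set_mem[at_ _] tx]].
  by split; [apply/mem_set; split => //; exact: lt_trans xb | rewrite -lte_fin].
by apply/mem_set; split; rewrite ?lte_fin.
Qed.

Let memB t : (t \in B) = (t \in I) && (x <= t).
Proof. by rewrite in_setI mem_setE in_itv /= andbT. Qed.

Let AI : A `<=` I.
Proof. by move=> t /mem_set; rewrite memA => /andP[/set_mem]. Qed.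

Let integral_A_fin_num :
  (\int[mu]_(t in A) ((t - m) * `|p t|)%:E)%E \is a fin_num.
Proof.
apply: integrable_fin_num => //.
exact: integrableS integrable_centered_normr_density.
Qed.

Lemma integral_centered_normr_density_split :
  (\int[mu]_(t in B) ((t - m) * `|p t|)%:E =
   - \int[mu]_(t in A) ((t - m) * `|p t|)%:E)%E.
Proof.
have AB : (I : set (measurableTypeR R)) = A `|` B.
  apply/seteqP; split => t.
    move/mem_set => tI; apply/set_mem.
    by rewrite in_setU memA memB tI /= ltNge orNb.
  by move/mem_set; rewrite in_setU memA memB -andb_orr => /andP[/set_mem].
have := integral_centered_normr_density; rewrite {1}AB integral_setU //.
- by rewrite addeC => h; rewrite -[LHS](addeK _ integral_A_fin_num) h sub0e.
- by rewrite -AB; exact: measurable_int integrable_centered_normr_density.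
- rewrite disj_set2E; apply/eqP/seteqP; split => // t [/mem_set + /mem_set].
  by rewrite memA memB => /andP[_ tx] /andP[_]; rewrite leNgt tx.
Qed.

Lemma integral_tau_kernel_row_normr : (\int[mu]_t tau_kernel (x, t) =
  - \int[mu]_(t in A) ((t - m) * `|p t|)%:E)%E.
Proof.
have xI : x \in I := mem_set Ix.
have [xm|mx] := ltP x m.
- transitivity (\int[mu]_(t in A) (`|t - m| * `|p t|)%:E)%E.
    rewrite [RHS]integral_mkcond; apply: eq_integral => t _.
    rewrite tau_kernelE patchE memA /tau_region xI xm andbT.
    by rewrite (leNgt m x) xm /= orbF.
  rewrite [X in (- X)%E](eq_integral
    (fun t : measurableTypeR R => - (`|t - m| * `|p t|)%:E)%E); last first.
    move=> t /set_mem[_ tx]; have tm : t - m < 0.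
      by rewrite subr_lt0 (lt_trans _ xm) // -lte_fin.
    by rewrite -EFinN -mulNr (ltr0_norm tm) opprK.
  by rewrite integral_ge0N ?oppeK // => t _; rewrite lee_fin mulr_ge0.
- rewrite -integral_centered_normr_density_split [RHS]integral_mkcond.
  apply: eq_integral => t _; rewrite tau_kernelE patchE memB /tau_region xI.
  rewrite (ltNge x m) mx /= andbF /=.
  by case: ifP => // /andP[_ xt]; rewrite ger0_norm // subr_ge0 (le_trans mx xt).
Qed.

Lemma integral_tau_kernel_row :
  (\int[mu]_t tau_kernel (x, t) = (- partial_central_moment x)%:E)%E.
Proof.
rewrite integral_tau_kernel_row_normr /partial_central_moment.
rewrite (integral_density_normr _ (fun t => t - m)) //; last exact: measurable_funB.
by rewrite EFinN fineK.
Qed.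

End row.

Lemma partial_central_moment_le0 x : I x -> partial_central_moment x <= 0.
Proof.
move=> Ix; rewrite -oppr_ge0 -lee_fin -integral_tau_kernel_row //.
by apply: integral_ge0 => t _; exact: tau_kernel_ge0.
Qed.

Lemma measurable_partial_central_moment :
  measurable_fun I partial_central_moment.
Proof.
apply: (eq_measurable_fun (fun x => - fine (\int[mu]_t tau_kernel (x, t))%E)).
  by move=> x /set_mem Ix; rewrite integral_tau_kernel_row //= opprK.
apply/measurable_funN/measurableT_comp => //.
exact: measurable_funS
  (measurable_fun_fubini_tonelli_F _ measurable_tau_kernel tau_kernel_ge0).
Qed.

Lemma Varp_id_eq_integral_partial_central_moment :
  Varp a b p id = (\int[mu]_(x in I) (- partial_central_moment x)%:E)%E.
Proof.
rewrite /Varp -/m (integral_density_normr _ (fun x => (x - m) ^+ 2)) //;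
  last by apply: measurable_funX; exact: measurable_funB.
rewrite integral_mkcond.
transitivity (\int[mu]_t \int[mu]_x tau_kernel (x, t))%E.
  by apply: eq_integral => t _; rewrite patchE integral_tau_kernel_col.
rewrite -fubini_tonelli; [|exact: measurable_tau_kernel|exact: tau_kernel_ge0].
rewrite [RHS]integral_mkcond; apply: eq_integral => x _; rewrite patchE.
have [xI|xI] := boolP (x \in I); first exact: integral_tau_kernel_row (set_mem xI).
under eq_integral do rewrite tau_kernelE /tau_region (negbTE xI).
exact: integral0.
Qed.

Lemma integral_partial_central_moment_eq_L1norm_tau :
  (\int[mu]_(x in I) (- partial_central_moment x)%:E)%E =
  L1norm a b p (fun x => - Ttilde a b p id x).
Proof.
have mp := measurable_density; have mF := measurable_partial_central_moment.
apply: ae_eq_integral => //.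
- by apply/measurable_EFinP; exact: measurable_funN.
- apply/measurable_EFinP; apply: measurable_funM => //.
  apply: measurableT_comp => //; apply: measurable_funN.
  by apply: measurable_funM => //; exact: measurableT_comp measurable_inv mp.
case: dens => _ + _; apply: filterS; first exact: (ae_filter_ringOfSetsType mu).
move=> x px Ix; have {}px := px Ix.
rewrite /Ttilde -/m -/(partial_central_moment x) normrN normrM.
rewrite gtr0_norm ?invr_gt0 // ler0_norm ?partial_central_moment_le0 //.
by rewrite mulrAC mulVf ?mul1r // gt_eqF.
Qed.

Section weight.
Variable w : R -> R.
Hypothesis wgt : weight a b p w.

Let integral_weightE (f : R -> R) : measurable_fun I f ->
  (forall x, 0 < p x -> 0 < w x -> f x = `|w x| * `|p x|) ->
  (\int[mu]_(x in I) (f x)%:E = \int[mu]_(x in I) (`|w x| * `|p x|)%:E)%E.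
Proof.
move=> mf fE; case: wgt => [[mw _] w_gt0 _]; case: dens => _ p_gt0 _.
apply: ae_eq_integral => //.
- exact/measurable_EFinP.
- apply/measurable_EFinP; apply: measurable_funM; apply: measurableT_comp => //.
  exact: measurable_density.
apply: (@filterS2 _ _ (ae_filter_ringOfSetsType mu) _ _ _ _ p_gt0 w_gt0).
by move=> x px wx Ix; rewrite fE ?px ?wx.
Qed.

Lemma L1norm_weightE :
  L1norm a b p w = (\int[mu]_(x in I) (`|w x| * `|p x|)%:E)%E.
Proof.
have [[mw _] _ _] := wgt.
apply: (integral_weightE (fun x => `|w x| * p x)) => [|x px _].
  by apply: measurable_funM measurable_density; exact: measurableT_comp.
by rewrite (gtr0_norm px).
Qed.

Lemma Dirichlet_weight_cst1 : Dirichlet a b p w (fun=> 1) = L1norm a b p w.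
Proof.
have [[mw _] _ _] := wgt; rewrite L1norm_weightE.
apply: (integral_weightE (fun x => `|1| ^+ 2 * w x * p x)).
  by apply: measurable_funM measurable_density; apply: measurable_funM.
by move=> x px wx; rewrite normr1 expr1n mul1r !gtr0_norm.
Qed.

Lemma H1_id_cst1 : (L1norm a b p w < +oo)%E -> H1 a b p w id (fun=> 1).
Proof.
move=> L_lty; split => //.
- split=> [|x y _ _]; first exact: measurable_cst.
  apply/integrableP; split; first exact: measurable_cst.
  under eq_integral do rewrite abse1.
  by rewrite integral_cst // mul1e; exact: lebesgue_measure_itv_cc_lty.
- move=> x y _ _ xy; rewrite Rintegral_cst // mul1r -[LHS]/(fine (y - x)%:E).
  congr fine; symmetry; apply: lebesgue_measure_sandwich => // t.
  by rewrite /= !in_itv /= => /andP[/ltW -> /ltW ->].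
- rewrite -Dirichlet_weight_cst1 in L_lty; apply: le_lt_trans L_lty.
  rewrite le_eqVlt; apply/orP; left; apply/eqP; apply: eq_integral => x _.
  by rewrite normr1 expr1n !mul1r mulrC.
Qed.

Lemma Varp_id_le_L1norm_weight :
  Cpw a b p w = 1%E -> (Varp a b p id <= L1norm a b p w)%E.
Proof.
move=> C1; have [->|L_fin] := eqVneq (L1norm a b p w) +oo%E; first exact: leey.
have L_ge0 : (0 <= L1norm a b p w)%E.
  by rewrite L1norm_weightE; apply: integral_ge0 => x _; rewrite lee_fin mulr_ge0.
have L_lty : (L1norm a b p w < +oo)%E by rewrite ltey.
have LE : L1norm a b p w = (fine (L1norm a b p w))%:E.
  by rewrite fineK // ge0_fin_numE.
have := @Varp_le_Cpw_mul_Dirichlet _ a b p w id (fun=> 1)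
  (fine (L1norm a b p w)) _ _ _ (H1_id_cst1 L_lty).
rewrite C1 mul1e -LE; apply; [exact: fine_ge0 | by [] | exact: Dirichlet_weight_cst1].
Qed.

End weight.

End density.

Theorem corollary2p5 (R : realType) (a b : \bar R) (p : R -> R) :
  (a < b)%E ->
  density a b p ->
  L2p a b p id ->
  let tau := fun x => - Ttilde a b p id x in
  Varp a b p id = L1norm a b p tau /\
  (forall w : R -> R, weight a b p w -> Cpw a b p w = 1%E ->
     (Varp a b p id <= L1norm a b p w)%E).
Proof.
move=> ab dens p_L2 tau; split.
  by rewrite Varp_id_eq_integral_partial_central_moment //
    integral_partial_central_moment_eq_L1norm_tau.
by move=> w wgt C1; exact: Varp_id_le_L1norm_weight.
Qed.
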